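(* In each of the two models described in the context (''learning from robot action, full observability'' and ''learning from experience, full observability''), given the reward matrix $R$ (together with the human's responses, i.e. the values $C_i$), the time horizon $T$ and the learning probability $\alpha$, an optimal robot policy can be computed in time polynomial in $m$ and $T$.
   Context: A robot and a human play a game repeated for $T$ rounds. The robot has actions $a^{\mathrm{R}}_1,\ldots,a^{\mathrm{R}}_m$, the human has actions $a^{\mathrm{H}}_1,\ldots,a^{\mathrm{H}}_n$, and a real $m\times n$ matrix $R=[r_{i,j}]$ gives the common reward of the action pair $(a^{\mathrm{R}}_i,a^{\mathrm{H}}_j)$; $r_i$ is row $i$. The human initially believes the reward matrix is $R^{\mathrm{H}}$ (rows $r^{\mathrm{H}}_i$). The state is $x_t\in\{0,1\}^m$, $x_{t,i}=1$ meaning the human has learned row $i$; learned rows stay learned, and the robot observes the state. Each round the robot plays a row $a^{\mathrm{R}}_i$; the human, if row $i$ is learned, plays an action maximizing $r_i$ (reward $\max r_i$), and otherwise plays $\arg\max r^{\mathrm{H}}_i$ (reward $C_i=r_i[\arg\max r^{\mathrm{H}}_i]$). In the ''learning from robot action'' model, an unlearned played row $i$ is learned with probability $\alpha$ after the robot plays and before the human acts (so the learning affects that round's reward). In the ''learning from experience'' model, an unlearned played row $i$ is learned with probability $\alpha$ after the human has acted in that round. A policy is a sequence of maps $\pi_t:\{0,1\}^m\to\{a^{\mathrm{R}}_1,\dots,a^{\mathrm{R}}_m\}$, $t\in[T]$, and it is optimal if it maximizes the expected total reward over the $T$ rounds from the initial state. *)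

From Stdlib Require Import Reals List Arith.
Open Scope R_scope.

Inductive model : Type :=
| FromRobotAction
| FromExperience.

Fixpoint maxupto (f : nat -> R) (k : nat) : R :=
  match k with
  | O => f O
  | S k' => Rmax (maxupto f k') (f k)
  end.

(** Reward of the learned human on row i: max r_i (columns 0..n-1). *)
Definition rowmax (n : nat) (Rm : nat -> nat -> R) (i : nat) : R :=
  maxupto (Rm i) (n - 1).

(** Reward of the unlearned human on row i: C_i = r_i[h i], where h i is
    the human's response (an argmax of r^H_i). *)
Definition unlearned (Rm : nat -> nat -> R) (h : nat -> nat) (i : nat) : R :=
  Rm i (h i).

(** States x : {0,1}^m are represented as [nat -> bool] (bit i for row i).
    A (time-dependent) policy maps the round t and the state to a row index
    (0-based: row i is action a^R_{i+1}). *)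
Definition state := nat -> bool.
Definition policy := nat -> state -> nat.

Definition learn (x : state) (i : nat) : state :=
  fun j => if Nat.eqb j i then true else x j.

(** Expected total reward collected in the k rounds t, t+1, ..., t+k-1,
    starting in state x, following policy pi; M i = max r_i, C i = C_i,
    a = alpha. *)
Fixpoint value (md : model) (M C : nat -> R) (a : R) (pi : policy)
         (t k : nat) (x : state) : R :=
  match k with
  | O => 0
  | S k' =>
    let i := pi t x in
    if x i then M i + value md M C a pi (S t) k' x
    else
      match md with
      | FromRobotAction =>
          (* learning happens before the human acts *)
          a * (M i + value md M C a pi (S t) k' (learn x i))
          + (1 - a) * (C i + value md M C a pi (S t) k' x)
      | FromExperience =>
          (* human acts (reward C_i), then learns *)
          C i + (a * value md M C a pi (S t) k' (learn x i)
                 + (1 - a) * value md M C a pi (S t) k' x)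
      end
  end.

Definition init_state : state := fun _ => false.

Definition valid_policy (m T : nat) (pi : policy) : Prop :=
  forall t x, (t < T)%nat -> (pi t x < m)%nat.

Definition total_reward (md : model) (n T : nat) (a : R)
           (Rm : nat -> nat -> R) (h : nat -> nat) (pi : policy) : R :=
  value md (rowmax n Rm) (unlearned Rm h) a pi 0 T init_state.

Definition optimal_policy (md : model) (m n T : nat) (a : R)
           (Rm : nat -> nat -> R) (h : nat -> nat) (pi : policy) : Prop :=
  valid_policy m T pi /\
  forall pi', valid_policy m T pi' ->
    total_reward md n T a Rm h pi' <= total_reward md n T a Rm h pi.

(** Natural
    registers only support +, truncated -, and comparison (no unit-cost
    multiplication of unbounded integers); real registers support the
    field operations and comparison (standard real-RAM / BSS model). *)
Inductive instr : Type :=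
| NConst (d k : nat)
| NAdd (d a b : nat)
| NSub (d a b : nat)
| NLoad (d a : nat)
| NStore (a s : nat)
| RofN (d a : nat)
| RAdd (d a b : nat)
| RSub (d a b : nat)
| RMul (d a b : nat)
| RDiv (d a b : nat)
| RLoad (d a : nat)
| RStore (a s : nat)
| JNLt (a b tgt : nat)
| JRLt (a b tgt : nat).

Record mstate : Type := MState { pc : nat; nreg : nat -> nat; rreg : nat -> R }.

Definition updN (f : nat -> nat) (d v : nat) : nat -> nat :=
  fun j => if Nat.eqb j d then v else f j.
Definition updR (f : nat -> R) (d : nat) (v : R) : nat -> R :=
  fun j => if Nat.eqb j d then v else f j.

Definition halted (p : list instr) (s : mstate) : Prop := (length p <= pc s)%nat.

Definition step (p : list instr) (s : mstate) : mstate :=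
  let N := nreg s in
  let Rr := rreg s in
  let nx := S (pc s) in
  match nth_error p (pc s) with
  | None => s
  | Some ins =>
    match ins with
    | NConst d k => MState nx (updN N d k) Rr
    | NAdd d a b => MState nx (updN N d (N a + N b)%nat) Rr
    | NSub d a b => MState nx (updN N d (N a - N b)%nat) Rr
    | NLoad d a => MState nx (updN N d (N (N a))) Rr
    | NStore a s' => MState nx (updN N (N a) (N s')) Rr
    | RofN d a => MState nx N (updR Rr d (INR (N a)))
    | RAdd d a b => MState nx N (updR Rr d (Rr a + Rr b))
    | RSub d a b => MState nx N (updR Rr d (Rr a - Rr b))
    | RMul d a b => MState nx N (updR Rr d (Rr a * Rr b))
    | RDiv d a b => MState nx N (updR Rr d (Rr a / Rr b))
    | RLoad d a => MState nx N (updR Rr d (Rr (N a)))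
    | RStore a s' => MState nx N (updR Rr (N a) (Rr s'))
    | JNLt a b tgt =>
        MState (if Nat.ltb (N a) (N b) then tgt else nx) N Rr
    | JRLt a b tgt =>
        MState (if Rlt_dec (Rr a) (Rr b) then tgt else nx) N Rr
    end
  end.

Fixpoint run (p : list instr) (k : nat) (s : mstate) : mstate :=
  match k with
  | O => s
  | S k' => run p k' (step p s)
  end.

(** [computes p b s0 o]: started in s0, program p halts within b steps
    (halted states are fixed points of [step]) with output N[0] = o. *)
Definition computes (p : list instr) (b : nat) (s0 : mstate) (o : nat) : Prop :=
  halted p (run p b s0) /\ nreg (run p b s0) 0%nat = o.

(** Input encoding of an instance (R, h, T, alpha) together with a query
    (t, x), asking for the action pi_t(x):
      N[0] = m, N[1] = n, N[2] = T, N[3] = t,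
      N[100 + 2 i] = h i, N[101 + 2 i] = x_i   (i < m),
      R[0] = alpha, R[100 + i n + j] = r_{i,j}  (i < m, j < n),
    all other registers 0; pc = 0. *)
Definition encode (m n T : nat) (a : R) (Rm : nat -> nat -> R) (h : nat -> nat)
           (t : nat) (x : state) : mstate :=
  MState 0
    (fun r =>
       match r with
       | 0 => m | 1 => n | 2 => T | 3 => t
       | _ =>
         if Nat.leb 100 r then
           let q := (r - 100)%nat in
           let i := Nat.div q 2 in
           if Nat.ltb i m then
             (if Nat.eqb (Nat.modulo q 2) 0 then h i
              else if x i then 1 else 0)%nat
           else 0%nat
         else 0%nat
       end)
    (fun r =>
       if Nat.eqb r 0 then a
       else if Nat.leb 100 r then
         let q := (r - 100)%nat in
         if Nat.ltb q (m * n)%nat then Rm (Nat.div q n) (Nat.modulo q n) else 0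
       else 0).

From Stdlib Require Import Reals List Arith Lia Lra.
Import ListNotations.
Open Scope R_scope.

(* Learned rows stay learned, so the value of a state depends only on its
   best learned row l (largest max r_l; none at all is encoded as l = m).
   Playing l again earns max r_l and keeps the state; teaching a row i that
   is not better than l leaves the best learned row unchanged and earns at
   most max r_i <= max r_l in either case, so it is dominated by playing l.
   Hence the optimal value W_k(l) of k remaining rounds obeys a Bellman
   recursion over the m + 1 values of l, and acting greedily with respect to
   it is optimal.  A real-RAM program tabulates W with two alternating
   buffers: O(m n) steps to read the input and O(m^2) steps per round. *)

Lemma maxupto_ge (f : nat -> R) k j : (j <= k)%nat -> f j <= maxupto f k.
Proof.
  induction k as [|k IH]; intros Hj; simpl.
  - replace j with 0%nat by lia. apply Rle_refl.
  - destruct (Nat.eq_dec j (S k)) as [->|Hne].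
    + apply Rmax_r.
    + eapply Rle_trans; [apply IH; lia|apply Rmax_l].
Qed.

Lemma unlearned_le_rowmax n Rm h i :
  (h i < n)%nat -> unlearned Rm h i <= rowmax n Rm i.
Proof. intros Hh. unfold unlearned, rowmax. apply maxupto_ge. lia. Qed.

Section OptimalValue.
Variables (md : model) (m : nat) (a : R) (M C : nat -> R).

Definition teach_value (Mi Ci Wi Wl : R) : R :=
  match md with
  | FromRobotAction => a * (Mi + Wi) + (1 - a) * (Ci + Wl)
  | FromExperience => Ci + (a * Wi + (1 - a) * Wl)
  end.

(* Row indices [l <= m] stand for the best learned row, [m] meaning that
   nothing is learned yet. *)
Definition improves (l i : nat) : bool :=
  if Nat.ltb l m then (if Rlt_dec (M l) (M i) then true else false) else true.

(* The state (best value, best row, found flag)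
   mirrors the registers of the program below; ties go to the earlier option. *)
Definition best_init (w : nat -> R) (l : nat) : R * nat * bool :=
  if Nat.ltb l m then (M l + w l, l, true) else (0, 0%nat, false).

Definition best_step (w : nat -> R) (l : nat) (st : R * nat * bool) (i : nat) :
    R * nat * bool :=
  let '(b, g, f) := st in
  if improves l i then
    let q := teach_value (M i) (C i) (w i) (w l) in
    if f then (if Rlt_dec b q then (q, i, true) else st) else (q, i, true)
  else st.

Fixpoint best_fold (w : nat -> R) (l : nat) (i : nat) : R * nat * bool :=
  match i with
  | O => best_init w l
  | S i' => best_step w l (best_fold w l i') i'
  end.

Fixpoint opt_value (k : nat) : nat -> R :=
  match k with
  | O => fun _ => 0
  | S k' => fun l => fst (fst (best_fold (opt_value k') l m))
  end.

Definition opt_action (k l : nat) : nat :=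
  snd (fst (best_fold (opt_value (k - 1)) l m)).

Fixpoint best_learned (x : state) (i : nat) : option nat :=
  match i with
  | O => None
  | S i' => if x i' then
              match best_learned x i' with
              | None => Some i'
              | Some l => if Rlt_dec (M l) (M i') then Some i' else Some l
              end
            else best_learned x i'
  end.

Definition best_row (x : state) : nat :=
  match best_learned x m with None => m | Some l => l end.

Definition opt_policy (T : nat) : policy := fun t x => opt_action (T - t) (best_row x).

Lemma best_fold_spec w l i :
  let '(b, g, f) := best_fold w l i in
  ((l < m)%nat -> f = true /\ M l + w l <= b) /\
  (forall j, (j < i)%nat -> improves l j = true ->
     f = true /\ teach_value (M j) (C j) (w j) (w l) <= b) /\
  (f = true -> ((l < m)%nat /\ g = l /\ b = M l + w l) \/
               ((g < i)%nat /\ improves l g = true /\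
                b = teach_value (M g) (C g) (w g) (w l))).
Proof.
  induction i as [|i IH]; simpl.
  - unfold best_init. destruct (Nat.ltb_spec l m).
    + split; [intros; split; [reflexivity|lra]|]. split; [intros; lia|]. intros; left; auto.
    + split; [intros; lia|]. split; [intros; lia|]. discriminate.
  - destruct (best_fold w l i) as [[b g] f]. unfold best_step.
    destruct IH as [IH1 [IH2 IH3]].
    destruct (improves l i) eqn:Hq.
    + destruct f.
      * destruct (Rlt_dec b _) as [Hlt|Hlt].
        -- split; [intros H; destruct (IH1 H); split; [auto|lra]|].
           split; [intros j Hj Hqj; destruct (Nat.eq_dec j i); [subst; split; [auto|lra]|];
                   destruct (IH2 j ltac:(lia) Hqj); split; [auto|lra]|].
           intros _; right; split; [lia|auto].
        -- split; [exact IH1|]. split.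
           ++ intros j Hj Hqj; destruct (Nat.eq_dec j i); [subst; split; [auto|lra]|].
              apply IH2; [lia|auto].
           ++ intros Hf; destruct (IH3 Hf) as [H|[H1 H2]]; [left; auto|right; split; [lia|auto]].
      * split; [intros H; destruct (IH1 H); discriminate|].
        split.
        -- intros j Hj Hqj; destruct (Nat.eq_dec j i); [subst; split; [auto|lra]|].
           destruct (IH2 j ltac:(lia) Hqj); discriminate.
        -- intros _; right; split; [lia|auto].
    + split; [exact IH1|]. split.
      * intros j Hj Hqj; destruct (Nat.eq_dec j i); [subst; congruence|]. apply IH2; [lia|auto].
      * intros Hf; destruct (IH3 Hf) as [H|[H1 H2]]; [left; auto|right; split; [lia|auto]].
Qed.

Lemma opt_value_ge_exploit k l :
  (l < m)%nat -> M l + opt_value k l <= opt_value (S k) l.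
Proof.
  intros Hl. simpl. pose proof (best_fold_spec (opt_value k) l m) as Hspec.
  destruct (best_fold (opt_value k) l m) as [[b g] f]. apply (proj1 Hspec Hl).
Qed.

Lemma opt_value_ge_teach k l i : (i < m)%nat -> improves l i = true ->
  teach_value (M i) (C i) (opt_value k i) (opt_value k l) <= opt_value (S k) l.
Proof.
  intros Hi Hq. simpl. pose proof (best_fold_spec (opt_value k) l m) as Hspec.
  destruct (best_fold (opt_value k) l m) as [[b g] f]. apply (proj1 (proj2 Hspec) i Hi Hq).
Qed.

Lemma best_fold_congr w l1 l2 i : (l1 < m)%nat -> (l2 < m)%nat ->
  M l1 = M l2 -> w l1 = w l2 ->
  fst (fst (best_fold w l1 i)) = fst (fst (best_fold w l2 i)) /\
  snd (best_fold w l1 i) = snd (best_fold w l2 i).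
Proof.
  intros H1 H2 HM Hw. induction i as [|i IH]; simpl.
  - unfold best_init. destruct (Nat.ltb_spec l1 m); [|lia]. destruct (Nat.ltb_spec l2 m); [|lia].
    simpl; split; [congruence|auto].
  - destruct (best_fold w l1 i) as [[b1 g1] f1]. destruct (best_fold w l2 i) as [[b2 g2] f2].
    simpl in IH. destruct IH as [-> ->].
    unfold best_step, improves. rewrite HM, Hw.
    destruct (Nat.ltb_spec l1 m); [|lia]. destruct (Nat.ltb_spec l2 m); [|lia].
    destruct (Rlt_dec (M l2) (M i)); simpl; auto.
    destruct f2; auto. destruct (Rlt_dec b2 _); auto.
Qed.

Lemma opt_value_congr k l1 l2 : (l1 < m)%nat -> (l2 < m)%nat -> M l1 = M l2 ->
  opt_value k l1 = opt_value k l2.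
Proof.
  revert l1 l2; induction k as [|k IH]; intros l1 l2 H1 H2 HM; simpl; auto.
  apply best_fold_congr; auto.
Qed.

Lemma best_learned_none x i : best_learned x i = None ->
  forall j, (j < i)%nat -> x j = false.
Proof.
  induction i as [|i IH]; simpl; intros H j Hj; [lia|].
  destruct (x i) eqn:Hx.
  - destruct (best_learned x i); [destruct (Rlt_dec _ _)|]; discriminate.
  - destruct (Nat.eq_dec j i); [subst; auto|]. apply IH; auto; lia.
Qed.

Lemma best_learned_some x i l : best_learned x i = Some l ->
  (l < i)%nat /\ x l = true /\ forall j, (j < i)%nat -> x j = true -> M j <= M l.
Proof.
  revert l; induction i as [|i IH]; simpl; intros l H; [discriminate|].
  destruct (x i) eqn:Hx.
  - destruct (best_learned x i) as [l0|] eqn:Hl.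
    + destruct (IH l0 eq_refl) as [Hl0 [Hxl0 Hmax]].
      destruct (Rlt_dec (M l0) (M i)); injection H as <-;
        (split; [lia|split; auto]); intros j Hj Hxj;
        (destruct (Nat.eq_dec j i); [subst; lra|]); specialize (Hmax j ltac:(lia) Hxj); lra.
    + injection H as <-. split; [lia|split; auto]. intros j Hj Hxj.
      destruct (Nat.eq_dec j i); [subst; lra|].
      rewrite (best_learned_none x i Hl j ltac:(lia)) in Hxj; discriminate.
  - destruct (IH l H) as [Hl [Hxl Hmax]]. split; [lia|split; auto]. intros j Hj Hxj.
    destruct (Nat.eq_dec j i); [subst; congruence|]. apply Hmax; auto; lia.
Qed.

Lemma best_learned_exists x i j : (j < i)%nat -> x j = true ->
  exists l, best_learned x i = Some l.
Proof.
  intros Hj Hx. destruct (best_learned x i) eqn:E; eauto.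
  rewrite (best_learned_none x i E j Hj) in Hx; discriminate.
Qed.

Lemma best_row_le x : (best_row x <= m)%nat.
Proof.
  unfold best_row. destruct (best_learned x m) eqn:E; [apply best_learned_some in E|]; lia.
Qed.

Lemma learn_same x j : learn x j j = true.
Proof. unfold learn. rewrite Nat.eqb_refl. auto. Qed.

Lemma learn_other x j i : i <> j -> learn x j i = x i.
Proof. intros H. unfold learn. destruct (Nat.eqb_spec i j); congruence. Qed.

Lemma best_row_learn_improving k x j : (j < m)%nat -> improves (best_row x) j = true ->
  opt_value k (best_row (learn x j)) = opt_value k j.
Proof.
  intros Hj Hq.
  destruct (best_learned_exists (learn x j) m j Hj (learn_same x j)) as [l' Hl'].
  destruct (best_learned_some _ _ _ Hl') as [Hl'm [Hxl' Hmax']].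
  unfold best_row; rewrite Hl'. apply opt_value_congr; auto.
  assert (M j <= M l') by (apply Hmax'; auto; apply learn_same).
  destruct (Nat.eq_dec l' j) as [->|Hne]; [lra|].
  rewrite learn_other in Hxl' by auto.
  unfold improves, best_row in Hq. destruct (best_learned x m) as [l|] eqn:Hl.
  - destruct (best_learned_some _ _ _ Hl) as [Hlm [_ Hmax]].
    destruct (Nat.ltb_spec l m); [|lia]. destruct (Rlt_dec (M l) (M j)); [|discriminate].
    specialize (Hmax l' Hl'm Hxl'). lra.
  - rewrite (best_learned_none x m Hl l' Hl'm) in Hxl'; discriminate.
Qed.

Lemma best_row_learn_dominated k x j l : (j < m)%nat -> best_learned x m = Some l ->
  ~ M l < M j -> opt_value k (best_row (learn x j)) = opt_value k l.
Proof.
  intros Hj Hl Hn. destruct (best_learned_some _ _ _ Hl) as [Hlm [Hxl Hmax]].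
  destruct (best_learned_exists (learn x j) m j Hj (learn_same x j)) as [l' Hl'].
  destruct (best_learned_some _ _ _ Hl') as [Hl'm [Hxl' Hmax']].
  unfold best_row; rewrite Hl'. apply opt_value_congr; auto.
  assert (M l <= M l').
  { apply Hmax'; auto.
    destruct (Nat.eq_dec l j); [subst; apply learn_same|rewrite learn_other; auto]. }
  assert (M j <= M l') by (apply Hmax'; auto; apply learn_same).
  destruct (Nat.eq_dec l' j) as [->|Hne]; [lra|].
  rewrite learn_other in Hxl' by auto. specialize (Hmax l' Hl'm Hxl'). lra.
Qed.

Hypothesis Hm : (1 <= m)%nat.
Hypothesis Ha : 0 <= a <= 1.
Hypothesis HCM : forall i, (i < m)%nat -> C i <= M i.

Lemma best_fold_found w l : (l <= m)%nat -> snd (best_fold w l m) = true.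
Proof.
  intros Hl. pose proof (best_fold_spec w l m) as Hspec.
  destruct (best_fold w l m) as [[b g] f]. destruct Hspec as [Hinit [Hcand _]].
  destruct (Nat.lt_ge_cases l m).
  - apply Hinit; auto.
  - apply (Hcand 0%nat); [lia|]. unfold improves. destruct (Nat.ltb_spec l m); [lia|auto].
Qed.

Lemma teach_value_mono Mi Ci W1 W2 V1 V2 : V1 <= W1 -> V2 <= W2 ->
  teach_value Mi Ci V1 V2 <= teach_value Mi Ci W1 W2.
Proof.
  intros H1 H2. unfold teach_value. destruct md.
  - assert (a * (Mi + V1) <= a * (Mi + W1)) by (apply Rmult_le_compat_l; lra).
    assert ((1 - a) * (Ci + V2) <= (1 - a) * (Ci + W2)) by (apply Rmult_le_compat_l; lra).
    lra.
  - assert (a * V1 <= a * W1) by (apply Rmult_le_compat_l; lra).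
    assert ((1 - a) * V2 <= (1 - a) * W2) by (apply Rmult_le_compat_l; lra).
    lra.
Qed.

Lemma teach_value_le_exploit Mi Ci Ml W : Ci <= Mi -> Mi <= Ml ->
  teach_value Mi Ci W W <= Ml + W.
Proof.
  intros H1 H2. unfold teach_value. destruct md; [|lra].
  assert (a * (Mi + W) <= a * (Ml + W)) by (apply Rmult_le_compat_l; lra).
  assert ((1 - a) * (Ci + W) <= (1 - a) * (Ml + W)) by (apply Rmult_le_compat_l; lra).
  lra.
Qed.

Lemma value_teach pi t k x i : pi t x = i -> x i = false ->
  value md M C a pi t (S k) x =
  teach_value (M i) (C i) (value md M C a pi (S t) k (learn x i))
                          (value md M C a pi (S t) k x).
Proof. intros Hp Hx. simpl. rewrite Hp, Hx. unfold teach_value. destruct md; reflexivity. Qed.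

Lemma value_le_opt_value k : forall t x pi,
  (forall s y, (t <= s < t + k)%nat -> (pi s y < m)%nat) ->
  value md M C a pi t k x <= opt_value k (best_row x).
Proof.
  induction k as [|k IH]; intros t x pi Hv; [simpl; lra|].
  set (i := pi t x).
  assert (Hi : (i < m)%nat) by (apply Hv; lia).
  assert (IH' : forall y, value md M C a pi (S t) k y <= opt_value k (best_row y))
    by (intros y; apply IH; intros; apply Hv; lia).
  destruct (x i) eqn:Hx.
  - destruct (best_learned_exists x m i Hi Hx) as [l Hl].
    destruct (best_learned_some _ _ _ Hl) as [Hlm [_ Hmax]].
    assert (Hrow : best_row x = l) by (unfold best_row; rewrite Hl; auto).
    specialize (Hmax i Hi Hx). specialize (IH' x). rewrite Hrow in *.
    pose proof (opt_value_ge_exploit k l Hlm).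
    cbn [value]. fold i. rewrite Hx. lra.
  - rewrite (value_teach pi t k x i eq_refl Hx).
    destruct (improves (best_row x) i) eqn:Hq.
    + eapply Rle_trans; [apply teach_value_mono; apply IH'|].
      rewrite best_row_learn_improving by auto. apply opt_value_ge_teach; auto.
    + assert (Hl : exists l, best_learned x m = Some l /\ ~ M l < M i).
      { unfold improves, best_row in Hq. destruct (best_learned x m) as [l|] eqn:Hl;
          [|destruct (Nat.ltb_spec m m); [lia|discriminate]].
        destruct (best_learned_some _ _ _ Hl) as [Hlm _].
        destruct (Nat.ltb_spec l m); [|lia].
        destruct (Rlt_dec (M l) (M i)); [discriminate|eauto]. }
      destruct Hl as [l [Hl Hn]].
      assert (Hrow : best_row x = l) by (unfold best_row; rewrite Hl; auto).
      destruct (best_learned_some _ _ _ Hl) as [Hlm _].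
      eapply Rle_trans; [apply teach_value_mono; apply IH'|].
      rewrite (best_row_learn_dominated k x i l Hi Hl Hn), Hrow.
      eapply Rle_trans; [|apply (opt_value_ge_exploit k l Hlm)].
      apply teach_value_le_exploit; [apply HCM; auto|lra].
Qed.

Lemma opt_action_spec k x :
  let i := opt_action (S k) (best_row x) in
  (i < m)%nat /\
  ((x i = true /\ opt_value (S k) (best_row x) = M i + opt_value k (best_row x)) \/
   (x i = false /\ improves (best_row x) i = true /\
    opt_value (S k) (best_row x) =
      teach_value (M i) (C i) (opt_value k i) (opt_value k (best_row x)))).
Proof.
  unfold opt_action. replace (S k - 1)%nat with k by lia. simpl.
  pose proof (best_fold_found (opt_value k) (best_row x) (best_row_le x)) as Hf.
  pose proof (best_fold_spec (opt_value k) (best_row x) m) as Hspec.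
  destruct (best_fold (opt_value k) (best_row x) m) as [[b g] f]. simpl in *. subst f.
  destruct Hspec as [_ [_ Hattained]].
  destruct (Hattained eq_refl) as [[Hlt [-> Hb]]|[Hlt [Hq Hb]]]; split; auto.
  - left. unfold best_row in *. destruct (best_learned x m) as [l|] eqn:Hl; [|lia].
    destruct (best_learned_some _ _ _ Hl) as [_ [Hxl _]]. auto.
  - right. split; [|auto].
    destruct (x g) eqn:Hx; auto.
    unfold improves, best_row in Hq. destruct (best_learned x m) as [l|] eqn:Hl.
    + destruct (best_learned_some _ _ _ Hl) as [Hlm [_ Hmax]].
      destruct (Nat.ltb_spec l m); [|lia]. destruct (Rlt_dec (M l) (M g)); [|discriminate].
      specialize (Hmax g Hlt Hx); lra.
    + rewrite (best_learned_none x m Hl g Hlt) in Hx; discriminate.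
Qed.

Lemma value_opt_policy T k : forall t x, (t + k = T)%nat ->
  value md M C a (opt_policy T) t k x = opt_value k (best_row x).
Proof.
  induction k as [|k IH]; intros t x Ht; [reflexivity|].
  destruct (opt_action_spec k x) as [Hlt Hcases].
  assert (Hp : opt_policy T t x = opt_action (S k) (best_row x))
    by (unfold opt_policy; f_equal; lia).
  destruct Hcases as [[Hx Hw]|[Hx [Hq Hw]]]; rewrite Hw.
  - cbn [value]. rewrite Hp, Hx, IH by lia. reflexivity.
  - rewrite (value_teach (opt_policy T) t k x _ Hp Hx), !IH by lia.
    rewrite best_row_learn_improving by auto. reflexivity.
Qed.

Lemma opt_policy_valid T t x : (t < T)%nat -> (opt_policy T t x < m)%nat.
Proof.
  intros H. unfold opt_policy. replace (T - t)%nat with (S (T - t - 1)) by lia.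
  apply opt_action_spec.
Qed.

End OptimalValue.

Definition exec (ins : instr) (s : mstate) : mstate :=
  let N := nreg s in
  let Rr := rreg s in
  let nx := S (pc s) in
  match ins with
  | NConst d k => MState nx (updN N d k) Rr
  | NAdd d a b => MState nx (updN N d (N a + N b)%nat) Rr
  | NSub d a b => MState nx (updN N d (N a - N b)%nat) Rr
  | NLoad d a => MState nx (updN N d (N (N a))) Rr
  | NStore a s' => MState nx (updN N (N a) (N s')) Rr
  | RofN d a => MState nx N (updR Rr d (INR (N a)))
  | RAdd d a b => MState nx N (updR Rr d (Rr a + Rr b))
  | RSub d a b => MState nx N (updR Rr d (Rr a - Rr b))
  | RMul d a b => MState nx N (updR Rr d (Rr a * Rr b))
  | RDiv d a b => MState nx N (updR Rr d (Rr a / Rr b))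
  | RLoad d a => MState nx N (updR Rr d (Rr (N a)))
  | RStore a s' => MState nx N (updR Rr (N a) (Rr s'))
  | JNLt a b tgt =>
      MState (if Nat.ltb (N a) (N b) then tgt else nx) N Rr
  | JRLt a b tgt =>
      MState (if Rlt_dec (Rr a) (Rr b) then tgt else nx) N Rr
  end.

Lemma step_exec p s ins : nth_error p (pc s) = Some ins -> step p s = exec ins s.
Proof. intros H. unfold step. rewrite H. reflexivity. Qed.

Lemma run_add p k1 k2 s : run p (k1 + k2) s = run p k2 (run p k1 s).
Proof. revert s; induction k1; intros s; simpl; auto. Qed.

Definition reaches (p : list instr) (s : mstate) (Q : mstate -> Prop) (b : nat) : Prop :=
  exists k, (k <= b)%nat /\ Q (run p k s).

Lemma reaches_now p s (Q : mstate -> Prop) b : Q s -> reaches p s Q b.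
Proof. intros H; exists 0%nat; split; [lia|exact H]. Qed.

Lemma reaches_weaken p s Q b b' : (b <= b')%nat -> reaches p s Q b -> reaches p s Q b'.
Proof. intros H [k [Hk HQ]]; exists k; split; [lia|auto]. Qed.

Lemma reaches_trans p s (Q1 Q2 : mstate -> Prop) b1 b2 :
  reaches p s Q1 b1 -> (forall s', Q1 s' -> reaches p s' Q2 b2) -> reaches p s Q2 (b1 + b2).
Proof.
  intros [k1 [H1 Q1s]] H. destruct (H _ Q1s) as [k2 [H2 Q2s]].
  exists (k1 + k2)%nat; split; [lia|]. rewrite run_add; auto.
Qed.

Lemma reaches_step p pc0 N Rr ins Q b : nth_error p pc0 = Some ins ->
  reaches p (exec ins (MState pc0 N Rr)) Q b -> reaches p (MState pc0 N Rr) Q (S b).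
Proof.
  intros Hn [k [Hk HQ]]. exists (S k); split; [lia|]. simpl.
  rewrite (step_exec p (MState pc0 N Rr) ins Hn). exact HQ.
Qed.

Lemma reaches_seq p s pc1 (P : (nat -> nat) -> (nat -> R) -> Prop) Q b1 b2 :
  reaches p s (fun s' => pc s' = pc1 /\ P (nreg s') (rreg s')) b1 ->
  (forall N Rr, P N Rr -> reaches p (MState pc1 N Rr) Q b2) ->
  reaches p s Q (b1 + b2).
Proof.
  intros H1 H2. apply (reaches_trans _ _ _ _ _ _ H1).
  intros [pc' N Rr] [Hpc HP]. cbn in Hpc. subst pc'. apply H2, HP.
Qed.

Lemma updN_eq f d v r : d = r -> updN f d v r = v.
Proof. intros ->; unfold updN; rewrite Nat.eqb_refl; auto. Qed.
Lemma updN_neq f d v r : d <> r -> updN f d v r = f r.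
Proof. intros H; unfold updN; destruct (Nat.eqb_spec r d); [congruence|auto]. Qed.
Lemma updR_eq f d v r : d = r -> updR f d v r = v.
Proof. intros ->; unfold updR; rewrite Nat.eqb_refl; auto. Qed.
Lemma updR_neq f d v r : d <> r -> updR f d v r = f r.
Proof. intros H; unfold updR; destruct (Nat.eqb_spec r d); [congruence|auto]. Qed.

Lemma step_halted p s : halted p s -> step p s = s.
Proof.
  unfold halted, step. intros H.
  destruct (nth_error p (pc s)) eqn:Hfetch; [|reflexivity].
  assert (pc s < length p)%nat by (apply nth_error_Some; rewrite Hfetch; discriminate). lia.
Qed.

Lemma run_halted p s k : halted p s -> run p k s = s.
Proof.
  revert s; induction k as [|k IH]; intros s H; [reflexivity|].
  simpl. rewrite step_halted by exact H. apply IH, H.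
Qed.

Lemma reaches_halted_computes p s b o :
  reaches p s (fun s' => halted p s' /\ nreg s' 0 = o) b -> computes p b s o.
Proof.
  intros [k [Hk [Hhalt Hout]]].
  assert (Hrun : run p b s = run p k s).
  { replace b with (k + (b - k))%nat by lia. rewrite run_add. apply run_halted, Hhalt. }
  unfold computes. rewrite Hrun. split; assumption.
Qed.

Section Encoding.
Variables (m n T : nat) (a : R) (Rm : nat -> nat -> R) (h : nat -> nat) (t : nat) (x : state).
Let s0 := encode m n T a Rm h t x.

Lemma encode_nreg_high r : (100 <= r)%nat -> nreg s0 r =
  (if Nat.ltb ((r - 100) / 2) m then
     (if Nat.eqb ((r - 100) mod 2) 0 then h ((r - 100) / 2) else if x ((r - 100) / 2) then 1 else 0)
   else 0)%nat.
Proof.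
  intros H. do 4 (destruct r as [|r]; [lia|]).
  unfold s0, encode; cbn [nreg].
  destruct (Nat.leb_spec 100 (S (S (S (S r))))); [reflexivity|lia].
Qed.

Lemma encode_response i : (i < m)%nat -> nreg s0 (100 + 2 * i) = h i.
Proof.
  intros Hi. rewrite encode_nreg_high by lia. replace (100 + 2 * i - 100)%nat with (i * 2)%nat by lia.
  rewrite Nat.div_mul by lia. rewrite Nat.Div0.mod_mul.
  destruct (Nat.ltb_spec i m); [reflexivity|lia].
Qed.

Lemma encode_state i : (i < m)%nat -> nreg s0 (100 + 2 * i + 1) = (if x i then 1 else 0)%nat.
Proof.
  intros Hi. rewrite encode_nreg_high by lia.
  replace (100 + 2 * i + 1 - 100)%nat with (1 + i * 2)%nat by lia.
  rewrite Nat.div_add, Nat.Div0.mod_add by lia.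
  simpl (1 / 2)%nat. simpl (1 mod 2)%nat. simpl (0 + i)%nat.
  destruct (Nat.ltb_spec i m); [reflexivity|lia].
Qed.

Lemma encode_reward i j : (i < m)%nat -> (j < n)%nat -> rreg s0 (100 + (i * n + j)) = Rm i j.
Proof.
  intros Hi Hj. unfold s0, encode; cbn [rreg].
  destruct (Nat.eqb_spec (100 + (i * n + j)) 0); [lia|].
  destruct (Nat.leb_spec 100 (100 + (i * n + j))); [|lia].
  replace (100 + (i * n + j) - 100)%nat with (i * n + j)%nat by lia.
  destruct (Nat.ltb_spec (i * n + j) (m * n)); [|nia].
  rewrite Nat.div_add_l by lia. rewrite Nat.div_small by lia.
  rewrite (Nat.add_comm (i * n) j), Nat.Div0.mod_add, Nat.mod_small by lia.
  f_equal; lia.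
Qed.

Lemma encode_rreg_high r : (100 + m * n <= r)%nat -> rreg s0 r = 0.
Proof.
  intros H. unfold s0, encode; cbn [rreg].
  destruct (Nat.eqb_spec r 0); [lia|].
  destruct (Nat.leb_spec 100 r); [|lia].
  destruct (Nat.ltb_spec (r - 100) (m * n)); [lia|reflexivity].
Qed.

End Encoding.

(* The last instruction of the second model is a padding no-op. *)
Definition backup_instr (md : model) (k : nat) : instr :=
  match md with
  | FromRobotAction =>
    match k with
    | 0 => NAdd 12 27 20 | 1 => RLoad 9 12 | 2 => RAdd 10 8 9 | 3 => RMul 10 0 10
    | 4 => NAdd 12 27 5 | 5 => RLoad 11 12 | 6 => RAdd 11 11 6 | 7 => RSub 12 1 0
    | 8 => RMul 11 12 11 | _ => RAdd 13 10 11
    end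
  | FromExperience =>
    match k with
    | 0 => NAdd 12 27 20 | 1 => RLoad 9 12 | 2 => RMul 10 0 9 | 3 => RSub 12 1 0
    | 4 => NAdd 12 27 5 | 5 => RLoad 11 12 | 6 => RMul 9 12 6 | 7 => RAdd 10 10 9
    | 8 => RAdd 13 11 10 | _ => JNLt 4 4 0
    end
  end.

(* Natural registers: N0..N3 hold the inputs m, n, T, t and
   N4 = 0, N5 = 1, N6 = 4, N7 = 2, N31 = 7 are constants ([JNLt 4 5] is an
   unconditional jump).  N8 = E := 100 + m n is the base of a table whose
   entries E + 4 l and E + 4 l + 1 hold max r_l and C_l, while E + 4 l + 2 and
   E + 4 l + 3 are two buffers for the values W_k(l), l <= m: the current
   stage is read at offset N20 and the next one written at offset N21
   (W_0 = 0 needs no writing, as [encode] leaves these registers 0).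
   pc 0-11:   E by repeated addition (there is no multiplication of naturals);
   pc 12-52:  the table, row i = N9 at a time (pc 20-31: max r_i into R2),
              tracking the best learned row in N16 (found), N17 (index, m if
              none) and R4 (its value);
   pc 53-113: stages k = N19 < N18 = T - t; in each, for every l = N22 <= m
              the fold [best_fold] over candidates i = N26 < m, its state
              (value, row, found) in R7, N25, N24; pc 82-91 put the
              [teach_value] of candidate i into R13; the action of state
              l = N17 is kept in N28;
   pc 114:    output N28. *)
Definition dp_program (md : model) : list instr := [
  NConst 5 1;
  NConst 6 4;
  NConst 7 2;
  NConst 31 7;
  RofN 1 5;
  NConst 8 100;
  NConst 9 0;
  JNLt 9 0 9;
  JNLt 4 5 12;
  NAdd 8 8 1;
  NAdd 9 9 5;
  JNLt 4 5 7;
  NConst 9 0;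
  NConst 10 100;
  NAdd 13 8 4;
  NConst 14 100;
  NConst 16 0;
  NAdd 17 0 4;
  JNLt 9 0 20;
  JNLt 4 5 53;
  RLoad 2 10;
  NAdd 12 10 5;
  NConst 11 1;
  JNLt 11 1 25;
  JNLt 4 5 32;
  RLoad 3 12;
  JRLt 2 3 28;
  JNLt 4 5 29;
  RLoad 2 12;
  NAdd 11 11 5;
  NAdd 12 12 5;
  JNLt 4 5 23;
  RStore 13 2;
  NLoad 15 14;
  NAdd 12 10 15;
  RLoad 3 12;
  NAdd 12 13 5;
  RStore 12 3;
  NAdd 12 14 5;
  NLoad 15 12;
  JNLt 4 15 42;
  JNLt 4 5 48;
  JNLt 16 5 45;
  JRLt 4 2 45;
  JNLt 4 5 48;
  RLoad 4 13;
  NAdd 17 9 4;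
  NConst 16 1;
  NAdd 9 9 5;
  NAdd 10 10 1;
  NAdd 13 13 6;
  NAdd 14 14 7;
  JNLt 4 5 18;
  NSub 18 2 3;
  NConst 19 0;
  NConst 20 2;
  NConst 21 3;
  NAdd 29 0 5;
  JNLt 19 18 60;
  JNLt 4 5 114;
  NConst 22 0;
  NAdd 23 8 4;
  JNLt 22 29 64;
  JNLt 4 5 109;
  NAdd 12 23 20;
  RLoad 6 12;
  JNLt 22 0 69;
  NConst 24 0;
  JNLt 4 5 73;
  RLoad 5 23;
  RAdd 7 5 6;
  NConst 24 1;
  NAdd 25 22 4;
  NConst 26 0;
  NAdd 27 8 4;
  JNLt 26 0 77;
  JNLt 4 5 101;
  RLoad 8 27;
  JNLt 22 0 80;
  JNLt 4 5 82;
  JRLt 5 8 82;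
  JNLt 4 5 98;
  backup_instr md 0;
  backup_instr md 1;
  backup_instr md 2;
  backup_instr md 3;
  backup_instr md 4;
  backup_instr md 5;
  backup_instr md 6;
  backup_instr md 7;
  backup_instr md 8;
  backup_instr md 9;
  JNLt 24 5 95;
  JRLt 7 13 95;
  JNLt 4 5 98;
  RStore 31 13;
  NAdd 25 26 4;
  NConst 24 1;
  NAdd 26 26 5;
  NAdd 27 27 6;
  JNLt 4 5 75;
  NAdd 12 23 21;
  RStore 12 7;
  JNLt 22 17 106;
  JNLt 17 22 106;
  NAdd 28 25 4;
  NAdd 22 22 5;
  NAdd 23 23 6;
  JNLt 4 5 62;
  NAdd 30 20 4;
  NAdd 20 21 4;
  NAdd 21 30 4;
  NAdd 19 19 5;
  JNLt 4 5 58;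
  NAdd 0 28 4
].

Ltac simpl_regs :=
  cbn [nreg rreg pc];
  repeat match goal with
  | |- context [updN ?f ?d ?v ?r] =>
      first [rewrite (updN_eq f d v r) by lia | rewrite (updN_neq f d v r) by lia]
  | |- context [updR ?f ?d ?v ?r] =>
      first [rewrite (updR_eq f d v r) by lia | rewrite (updR_neq f d v r) by lia]
  end.

Ltac take_branch :=
  match goal with
  | |- context [Nat.ltb ?x ?y] =>
      first [rewrite (proj2 (Nat.ltb_lt x y)) by lia | rewrite (proj2 (Nat.ltb_ge x y)) by lia]
  end.

Ltac sym_step :=
  eapply reaches_step; [reflexivity|];
  cbn [exec backup_instr pc nreg rreg]; simpl_regs; repeat take_branch.

Open Scope nat_scope.

Section Correctness.
Variables (md : model) (m n T : nat) (a : R) (Rm : nat -> nat -> R) (h : nat -> nat).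
Variables (t : nat) (x : state).
Let s0 := encode m n T a Rm h t x.
Let Nin := nreg s0.
Let Rin := rreg s0.
Let E := (100 + m * n)%nat.
Let Mv := rowmax n Rm.
Let Cv := unlearned Rm h.
Let W := opt_value md m a Mv Cv.
Let lx := best_row m Mv x.
Hypothesis Hm1 : 1 <= m.
Hypothesis Hn : 1 <= n.
Hypothesis Hh : forall i, i < m -> h i < n.

Definition base_regs (N : nat -> nat) (Rr : nat -> R) : Prop :=
  N 0 = m /\ N 1 = n /\ N 2 = T /\ N 3 = t /\ N 4 = 0 /\ N 5 = 1 /\ N 6 = 4 /\ N 7 = 2 /\ N 31 = 7 /\
  (forall r, 100 <= r -> N r = Nin r) /\ Rr 0 = a /\ Rr 1 = 1%R.

Ltac destruct_base H := destruct H as (B0 & B1 & B2 & B3 & B4 & B5 & B6 & B7 & B31 & BN & BR0 & BR1).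

Ltac solve_base :=
  repeat split; simpl_regs; auto;
  try (let r := fresh in let Hr := fresh in intros r Hr; simpl_regs; auto).

Lemma base_regs_frame N Rr N' Rr' : base_regs N Rr ->
  (forall r, (r <= 7 \/ r = 31 \/ 100 <= r) -> N' r = N r) ->
  (forall r, r <= 1 -> Rr' r = Rr r) -> base_regs N' Rr'.
Proof.
  intros HB HN HR. destruct_base HB.
  repeat split; try (rewrite HN by lia; auto); try (rewrite HR by lia; auto).
  intros r Hr. rewrite HN by lia. auto.
Qed.

Ltac solve_frame := intros; simpl_regs; first [reflexivity |
  unfold updR, updN;
  repeat (match goal with |- context [Nat.eqb ?a ?b] => destruct (Nat.eqb_spec a b) end);
  first [reflexivity | exfalso; lia]].

Definition inv_table_ptr (i : nat) (N : nat -> nat) (Rr : nat -> R) : Prop :=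
  base_regs N Rr /\ N 9 = i /\ N 8 = (100 + i * n)%nat /\ (i <= m)%nat /\
  (forall r, r <> 1%nat -> Rr r = Rin r).

Lemma prologue_spec :
  reaches (dp_program md) s0 (fun s => pc s = 7 /\ inv_table_ptr 0 (nreg s) (rreg s)) 7.
Proof.
  unfold s0. change (encode m n T a Rm h t x) with (MState 0 Nin Rin).
  assert (N0 : Nin 0 = m) by reflexivity. assert (N1 : Nin 1 = n) by reflexivity.
  assert (N2 : Nin 2 = T) by reflexivity. assert (N3 : Nin 3 = t) by reflexivity.
  assert (N4 : Nin 4 = 0) by reflexivity. assert (R0 : Rin 0 = a) by reflexivity.
  sym_step. sym_step. sym_step. sym_step. sym_step. sym_step. sym_step. apply reaches_now. split; [reflexivity|].
  split; [|split; [simpl_regs; lia|split; [simpl_regs; lia|split; [lia|]]]].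
  - solve_base.
  - intros r Hr. simpl_regs. reflexivity.
Qed.

Lemma table_ptr_loop d : forall i N Rr, (m - i = d)%nat -> inv_table_ptr i N Rr ->
  reaches (dp_program md) (MState 7 N Rr)
    (fun s => pc s = 12 /\ inv_table_ptr m (nreg s) (rreg s)) (5 * d + 2).
Proof.
  induction d as [|d IH]; intros i N Rr Hd (HB & H9 & H8 & Hi & HR);
    pose proof HB as HB'; destruct_base HB'.
  - sym_step. sym_step. apply reaches_now. split; [reflexivity|].
    replace m with i by lia. repeat split; auto.
  - apply (reaches_weaken _ _ _ (4 + (5 * d + 2))); [lia|].
    sym_step. sym_step. sym_step. sym_step.
    apply (IH (S i)); [lia|].
    split; [solve_base|]. split; [simpl_regs; lia|]. split; [simpl_regs; rewrite H8, B1; nia|].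
    split; [lia|]. auto.
Qed.

Definition best_learned_regs (i : nat) (N : nat -> nat) (Rr : nat -> R) : Prop :=
  match best_learned Mv x i with
  | None => N 16 = 0 /\ N 17 = m
  | Some l => N 16 = 1 /\ N 17 = l /\ Rr 4 = Mv l
  end.

Definition inv_rows (i : nat) (N : nat -> nat) (Rr : nat -> R) : Prop :=
  base_regs N Rr /\ N 8 = E /\ N 9 = i /\ N 10 = 100 + i * n /\ N 13 = E + 4 * i /\
  N 14 = 100 + 2 * i /\
  i <= m /\ best_learned_regs i N Rr /\
  (forall r, 100 <= r < E -> Rr r = Rin r) /\
  (forall l, l < i -> Rr (E + 4 * l) = Mv l /\ Rr (E + 4 * l + 1) = Cv l) /\
  (forall l, Rr (E + 4 * l + 2) = 0%R).

Definition inv_rowmax (i j : nat) (N : nat -> nat) (Rr : nat -> R) : Prop :=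
  inv_rows i N Rr /\ i < m /\ N 11 = j /\ N 12 = 100 + i * n + j /\ 1 <= j <= n /\
  Rr 2 = maxupto (Rm i) (j - 1).

Lemma inv_rows_frame i N Rr N' Rr' : inv_rows i N Rr ->
  (forall r, (r <= 10 \/ r = 13 \/ r = 14 \/ r = 16 \/ r = 17 \/ r = 31 \/ 100 <= r) -> N' r = N r) ->
  (forall r, (r <= 1 \/ r = 4 \/ 100 <= r) -> Rr' r = Rr r) -> inv_rows i N' Rr'.
Proof.
  intros (HB & H8 & H9 & H10 & H13 & H14 & Hi & HL & HRin & HMC & HZ) HN HR.
  split; [eapply base_regs_frame; eauto; intros; apply HN; lia|].
  rewrite !HN by lia. do 6 (split; [auto|]).
  split.
  { unfold best_learned_regs in *.
    destruct (best_learned Mv x i); rewrite !HN by lia; auto. rewrite HR by lia. auto. }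
  split; [intros r Hr; rewrite HR by lia; auto|].
  split; [intros l Hl; rewrite !HR by lia; auto|].
  intros l; rewrite HR by lia; auto.
Qed.

Lemma rows_loop_entry N Rr : inv_table_ptr m N Rr ->
  reaches (dp_program md) (MState 12 N Rr) (fun s => pc s = 18 /\ inv_rows 0 (nreg s) (rreg s)) 6.
Proof.
  intros (HB & H9 & H8 & Hi & HR). pose proof HB as HB'. destruct_base HB'.
  assert (HE : E = 100 + m * n) by reflexivity.
  sym_step. sym_step. sym_step. sym_step. sym_step. sym_step. apply reaches_now. split; [reflexivity|].
  split; [eapply base_regs_frame; [exact HB|solve_frame|solve_frame]|].
  split; [simpl_regs; lia|]. split; [simpl_regs; lia|]. split; [simpl_regs; lia|].
  split; [simpl_regs; lia|]. split; [simpl_regs; lia|]. split; [lia|].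
  split; [unfold best_learned_regs; simpl; simpl_regs; split; lia|].
  split; [intros r Hr; rewrite HR by lia; reflexivity|].
  split; [intros; lia|].
  intros l. rewrite HR by lia. apply encode_rreg_high. lia.
Qed.

Lemma rowmax_loop d : forall i j N Rr, n - j = d -> inv_rowmax i j N Rr ->
  reaches (dp_program md) (MState 23 N Rr)
    (fun s => pc s = 32 /\ inv_rows i (nreg s) (rreg s) /\ i < m /\ rreg s 2 = Mv i) (8 * d + 2).
Proof.
  induction d as [|d IH]; intros i j N Rr Hd (H1 & Him & H11 & H12 & Hj & HR2);
    pose proof H1 as H1'; destruct H1' as (HB & H8 & H9 & H10 & H13 & H14 & Hi & HL & HRin & HMC & HZ);
    pose proof HB as HB'; destruct_base HB'.
  - sym_step. sym_step. apply reaches_now. cbn [nreg rreg pc].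
    split; [reflexivity|]. split; [auto|]. split; [auto|].
    rewrite HR2. unfold Mv, rowmax. f_equal. lia.
  - apply (reaches_weaken _ _ _ (7 + (8 * d + 2))); [lia|].
    sym_step. sym_step. sym_step.
    assert (E3 : Rr (N 12) = Rm i j).
    { rewrite H12, HRin by (unfold E; nia). unfold Rin, s0.
      replace (100 + i * n + j) with (100 + (i * n + j)) by lia. apply encode_reward; lia. }
    destruct (Rlt_dec _ _) as [Hlt|Hlt].
    + sym_step. sym_step. sym_step. sym_step.
      apply (IH i (S j)); [lia|].
      split; [|split; [auto|split; [simpl_regs; lia|split; [simpl_regs; lia|split; [lia|]]]]].
      * eapply inv_rows_frame; [exact H1|solve_frame|solve_frame].
      * simpl_regs. rewrite E3. replace (S j - 1) with (S (j - 1)) by lia. simpl maxupto.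
        replace (S (j - 1)) with j by lia. rewrite HR2, E3 in *. symmetry. apply Rmax_right. lra.
    + sym_step. sym_step. sym_step. sym_step.
      apply (IH i (S j)); [lia|].
      split; [|split; [auto|split; [simpl_regs; lia|split; [simpl_regs; lia|split; [lia|]]]]].
      * eapply inv_rows_frame; [exact H1|solve_frame|solve_frame].
      * simpl_regs. replace (S j - 1) with (S (j - 1)) by lia. simpl maxupto.
        replace (S (j - 1)) with j by lia. rewrite HR2, E3 in *. symmetry. apply Rmax_left. lra.
Qed.

Lemma inv_rows_cost_read i N Rr : inv_rows i N Rr -> i < m ->
  N (N 14) = h i /\ Rr (N 10 + N (N 14)) = Cv i.
Proof.
  intros (HB & H8 & H9 & H10 & H13 & H14 & Hi & HL & HRin & HMC & HZ) Him.
  pose proof HB as HB'; destruct_base HB'.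
  assert (F1 : N (N 14) = h i) by (rewrite H14, BN by lia; apply encode_response; auto).
  assert (Hhi : h i < n) by auto.
  split; [exact F1|].
  rewrite F1, H10, HRin by (unfold E; nia). unfold Rin, s0.
  replace (100 + i * n + h i) with (100 + (i * n + h i)) by lia. apply encode_reward; lia.
Qed.

Lemma inv_rows_next i N Rr N' Rr' : inv_rows i N Rr -> i < m -> Rr 2 = Mv i ->
  N' 9 = N 9 + N 5 -> N' 10 = N 10 + N 1 -> N' 13 = N 13 + N 6 -> N' 14 = N 14 + N 7 ->
  (forall r, (r <= 8 \/ r = 31 \/ 100 <= r) -> N' r = N r) ->
  (forall r, r <= 1 -> Rr' r = Rr r) ->
  (forall r, 100 <= r ->
     Rr' r = updR (updR Rr (N 13) (Rr 2)) (N 13 + N 5) (Rr (N 10 + N (N 14))) r) ->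
  best_learned_regs (S i) N' Rr' -> inv_rows (S i) N' Rr'.
Proof.
  intros H1 Him HR2 E9 E10 E13 E14 FN FR FR' HL'.
  destruct (inv_rows_cost_read i N Rr H1 Him) as [_ Hcost].
  destruct H1 as (HB & H8 & H9 & H10 & H13 & H14 & Hi & HL & HRin & HMC & HZ).
  pose proof HB as HB'; destruct_base HB'.
  assert (HE : E = 100 + m * n) by reflexivity.
  split; [eapply base_regs_frame; [exact HB|intros; apply FN; lia|intros; apply FR; lia]|].
  rewrite E9, E10, E13, E14, !FN by lia.
  split; [auto|]. split; [lia|]. split; [nia|]. split; [lia|]. split; [lia|]. split; [lia|].
  split; [auto|].
  split; [intros r Hr; rewrite FR' by lia; simpl_regs; auto|].
  split.
  - intros l Hl. rewrite !FR' by lia. destruct (Nat.eq_dec l i) as [->|Hne].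
    + simpl_regs. split; [auto|]. rewrite Hcost; auto.
    + simpl_regs. apply HMC; lia.
  - intros l. rewrite FR' by lia. simpl_regs. auto.
Qed.

Lemma store_row i N Rr : inv_rows i N Rr -> i < m -> Rr 2 = Mv i ->
  reaches (dp_program md) (MState 32 N Rr)
    (fun s => pc s = 18 /\ inv_rows (S i) (nreg s) (rreg s)) 20.
Proof.
  intros H1 Him HR2.
  pose proof (fun N' Rr' => inv_rows_next i N Rr N' Rr' H1 Him HR2) as Hfin.
  destruct (inv_rows_cost_read i N Rr H1 Him) as [Hresponse _].
  pose proof H1 as H1'; destruct H1' as (HB & H8 & H9 & H10 & H13 & H14 & Hi & HL & HRin & HMC & HZ);
  pose proof HB as HB'; destruct_base HB'.
  assert (HE : E = 100 + m * n) by reflexivity.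
  assert (Hhi : h i < n) by auto.
  assert (Hrow : i * n + n <= m * n) by nia.
  assert (Hxi : N (N 14 + N 5) = if x i then 1 else 0)
    by (rewrite H14, B5, BN by lia; apply encode_state; auto).
  sym_step. sym_step. sym_step. sym_step. sym_step. sym_step. sym_step. sym_step.
  destruct (x i) eqn:Hx.
  - sym_step.
    unfold best_learned_regs in HL. destruct (best_learned Mv x i) as [l|] eqn:Hls.
    + destruct HL as (H16 & H17 & H4).
      sym_step. sym_step. destruct (Rlt_dec _ _) as [Hlt|Hlt].
      * do 8 sym_step. apply reaches_now. split; [reflexivity|].
        apply Hfin; try solve_frame.
        unfold best_learned_regs. simpl. rewrite Hx, Hls. rewrite H4 in Hlt. rewrite HR2 in Hlt.
        destruct (Rlt_dec (Mv l) (Mv i)); [|contradiction]. simpl_regs. split; [auto|]. split; [lia|].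
        auto.
      * sym_step. sym_step. sym_step. sym_step. sym_step. sym_step. apply reaches_now. split; [reflexivity|].
        apply Hfin; try solve_frame.
        unfold best_learned_regs. simpl. rewrite Hx, Hls. rewrite H4 in Hlt. rewrite HR2 in Hlt.
        destruct (Rlt_dec (Mv l) (Mv i)); [contradiction|]. simpl_regs. auto.
    + destruct HL as (H16 & H17).
      do 9 sym_step. apply reaches_now. split; [reflexivity|].
      apply Hfin; try solve_frame.
      unfold best_learned_regs. simpl. rewrite Hx, Hls. simpl_regs. split; [auto|]. split; [lia|]. auto.
  - sym_step. sym_step. sym_step. sym_step. sym_step. sym_step. sym_step. apply reaches_now. split; [reflexivity|].
    apply Hfin; try solve_frame.
    unfold best_learned_regs in *. simpl. rewrite Hx. destruct (best_learned Mv x i); simpl_regs; auto.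
Qed.

Lemma rows_loop d : forall i N Rr, m - i = d -> inv_rows i N Rr ->
  reaches (dp_program md) (MState 18 N Rr)
    (fun s => pc s = 53 /\ inv_rows m (nreg s) (rreg s)) ((8 * n + 30) * d + 2).
Proof.
  induction d as [|d IH]; intros i N Rr Hd H1;
    pose proof H1 as H1'; destruct H1' as (HB & H8 & H9 & H10 & H13 & H14 & Hi & HL & HRin & HMC & HZ);
    pose proof HB as HB'; destruct_base HB'.
  - apply (reaches_weaken _ _ _ 2); [lia|].
    sym_step. sym_step. apply reaches_now. split; [reflexivity|]. replace m with i by lia. exact H1.
  - apply (reaches_weaken _ _ _ (4 + ((8 * (n - 1) + 2) + (20 + ((8 * n + 30) * d + 2))))); [nia|].
    sym_step. sym_step. sym_step. sym_step.
    eapply reaches_trans; [apply (rowmax_loop (n - 1) i 1); [lia|]|].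
    + split; [eapply inv_rows_frame; [exact H1|solve_frame|solve_frame]|].
      split; [lia|]. split; [simpl_regs; auto|]. split; [simpl_regs; lia|]. split; [lia|].
      simpl_regs. rewrite H10. rewrite HRin by (assert (HE : E = 100 + m * n) by reflexivity; nia).
      unfold Rin, s0. simpl maxupto. replace (100 + i * n) with (100 + (i * n + 0)) by lia.
      apply encode_reward; lia.
    + intros [pc' N' Rr'] (Hpc & H1' & Him & HR2). cbn [pc nreg rreg] in *. subst pc'.
      eapply reaches_seq; [apply (store_row i); auto|].
      intros N'' Rr'' H1''. apply (IH (S i)); [lia|auto].
Qed.

Definition inv_dp (k : nat) (N : nat -> nat) (Rr : nat -> R) : Prop :=
  base_regs N Rr /\ N 8 = E /\ N 17 = lx /\ N 18 = T - t /\ N 19 = k /\ k <= T - t /\ N 29 = m + 1 /\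
  ((N 20 = 2 /\ N 21 = 3) \/ (N 20 = 3 /\ N 21 = 2)) /\
  (forall l, l <= m -> Rr (E + 4 * l + N 20) = W k l) /\
  (forall l, l < m -> Rr (E + 4 * l) = Mv l /\ Rr (E + 4 * l + 1) = Cv l).

Definition inv_stage (k : nat) (N : nat -> nat) (Rr : nat -> R) : Prop :=
  inv_dp k N Rr /\ (1 <= k -> N 28 = opt_action md m a Mv Cv k lx).

Definition inv_states (k l : nat) (N : nat -> nat) (Rr : nat -> R) : Prop :=
  inv_dp k N Rr /\ k < T - t /\ N 22 = l /\ N 23 = E + 4 * l /\ l <= m + 1 /\
  (forall l', l' < l -> Rr (E + 4 * l' + N 21) = W (S k) l') /\
  (lx < l -> N 28 = opt_action md m a Mv Cv (S k) lx).

Definition best_fold_regs (st : R * nat * bool) (N : nat -> nat) (Rr : nat -> R) : Prop :=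
  let '(b, g, f) := st in N 24 = (if f then 1 else 0) /\ (f = true -> Rr 7 = b /\ N 25 = g).

Definition inv_candidates (k l i : nat) (N : nat -> nat) (Rr : nat -> R) : Prop :=
  inv_states k l N Rr /\ l <= m /\ N 26 = i /\ N 27 = E + 4 * i /\ i <= m /\ Rr 6 = W k l /\
  (l < m -> Rr 5 = Mv l) /\ best_fold_regs (best_fold md m a Mv Cv (W k) l i) N Rr.

Lemma inv_dp_frame k N Rr N' Rr' : inv_dp k N Rr ->
  (forall r, (r <= 8 \/ (17 <= r <= 21) \/ r = 29 \/ r = 31 \/ 100 <= r) -> N' r = N r) ->
  (forall r, r <= 1 -> Rr' r = Rr r) ->
  (forall l, l <= m -> Rr' (E + 4 * l + N 20) = Rr (E + 4 * l + N 20)) ->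
  (forall l, l < m -> Rr' (E + 4 * l) = Rr (E + 4 * l) /\ Rr' (E + 4 * l + 1) = Rr (E + 4 * l + 1)) ->
  inv_dp k N' Rr'.
Proof.
  intros (HB & H8 & H17 & H18 & H19 & Hk & H29 & Ho & HW & HMC) HN HR1 HR2 HR3.
  split; [eapply base_regs_frame; [exact HB|intros; apply HN; lia|auto]|].
  rewrite !HN by lia. do 6 (split; [auto|]). split; [auto|].
  split; [intros l Hl; rewrite HR2; auto|].
  intros l Hl; destruct (HR3 l Hl) as [-> ->]; auto.
Qed.

Lemma inv_states_frame k l N Rr N' Rr' : inv_states k l N Rr ->
  (forall r, (r <= 8 \/ (17 <= r <= 23) \/ r = 28 \/ r = 29 \/ r = 31 \/ 100 <= r) -> N' r = N r) ->
  (forall r, (r <= 1 \/ 100 <= r) -> Rr' r = Rr r) ->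
  inv_states k l N' Rr'.
Proof.
  intros (HC & Hk & H22 & H23 & Hl & Hcur & H28) HN HR.
  assert (HE : E = 100 + m * n) by reflexivity.
  split; [eapply inv_dp_frame; [exact HC|intros; apply HN; lia|intros; apply HR; lia|
    intros; apply HR; lia|intros; split; apply HR; lia]|].
  rewrite !HN by lia. do 4 (split; [auto|]).
  split; [intros l' Hl'; rewrite HR by lia; auto|auto].
Qed.

Lemma inv_candidates_frame k l i N Rr N' Rr' : inv_candidates k l i N Rr ->
  (forall r, (r <= 8 \/ (17 <= r <= 31) \/ 100 <= r) -> N' r = N r) ->
  (forall r, (r <= 7 \/ 100 <= r) -> Rr' r = Rr r) ->
  inv_candidates k l i N' Rr'.
Proof.
  intros (H4 & Hlm & H26 & H27 & Hi & HR6 & HR5 & Hfr) HN HR.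
  split; [eapply inv_states_frame; [exact H4|intros; apply HN; lia|intros; apply HR; lia]|].
  rewrite !HN by lia. rewrite !HR by lia.
  do 5 (split; [auto|]). split; [auto|].
  unfold best_fold_regs in *. destruct (best_fold md m a Mv Cv (W k) l i) as [[b g] f].
  rewrite !HN by lia. rewrite HR by lia. auto.
Qed.

Lemma dp_entry N Rr : inv_rows m N Rr ->
  reaches (dp_program md) (MState 53 N Rr) (fun s => pc s = 58 /\ inv_stage 0 (nreg s) (rreg s)) 5.
Proof.
  intros (HB & H8 & H9 & H10 & H13 & H14 & Hi & HL & HRin & HMC & HZ).
  pose proof HB as HB'. destruct_base HB'.
  assert (HE : E = 100 + m * n) by reflexivity.
  sym_step. sym_step. sym_step. sym_step. sym_step. apply reaches_now. split; [reflexivity|].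
  split; [|intros; lia].
  split; [eapply base_regs_frame; [exact HB|solve_frame|solve_frame]|].
  split; [simpl_regs; auto|].
  split.
  { simpl_regs. unfold best_learned_regs in HL. unfold lx, best_row.
    destruct (best_learned Mv x m); destruct HL as [? [? ?]] || destruct HL; auto. }
  split; [simpl_regs; lia|]. split; [simpl_regs; lia|]. split; [lia|]. split; [simpl_regs; lia|].
  split; [simpl_regs; lia|].
  split; [intros l Hl; simpl_regs; rewrite HZ; reflexivity|].
  intros l Hl. apply HMC. lia.
Qed.

Lemma backup_spec N Rr Q b Mi Ci Wi Wl :
  N 27 >= 100 -> (N 20 = 2 \/ N 20 = 3) -> N 5 = 1 -> Rr 0 = a -> Rr 1 = 1%R ->
  Rr 6 = Wl -> Rr 8 = Mi -> Rr (N 27 + N 20) = Wi -> Rr (N 27 + N 5) = Ci ->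
  (forall Rr', Rr' 13 = teach_value md a Mi Ci Wi Wl -> (forall r, (r < 9 \/ 13 < r) -> Rr' r = Rr r) ->
     reaches (dp_program md) (MState 92 (updN (updN N 12 (N 27 + N 20)) 12 (N 27 + N 5)) Rr') Q b) ->
  reaches (dp_program md) (MState 82 N Rr) Q (10 + b).
Proof.
  intros H27 H20 H5 HR0 HR1 HR6 HR8 HWi HCi Hk.
  destruct md; do 10 sym_step; apply Hk; try solve_frame; simpl_regs;
    rewrite ?HR0, ?HR1, ?HR6, ?HR8, ?HWi, ?HCi; unfold teach_value; reflexivity.
Qed.

Lemma inv_candidates_next k l i N Rr N' Rr' : inv_candidates k l i N Rr -> i < m ->
  (forall r, (r <= 8 \/ (17 <= r <= 23) \/ r = 28 \/ r = 29 \/ r = 31 \/ 100 <= r) -> N' r = N r) ->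
  (forall r, (r <= 6 \/ 100 <= r) -> Rr' r = Rr r) -> N' 26 = S i -> N' 27 = E + 4 * S i ->
  best_fold_regs (best_fold md m a Mv Cv (W k) l (S i)) N' Rr' ->
  inv_candidates k l (S i) N' Rr'.
Proof.
  intros (H4 & Hlm & H26 & H27 & Hi & HR6 & HR5 & Hfr) Him HN HR E26 E27 Hst.
  split; [eapply inv_states_frame; [exact H4|exact HN|intros; apply HR; lia]|].
  split; [lia|]. split; [auto|]. split; [auto|]. split; [lia|].
  split; [rewrite HR by lia; auto|]. split; [intros; rewrite HR by lia; auto|].
  exact Hst.
Qed.

Lemma improving_candidate k l i N Rr : inv_candidates k l i N Rr -> i < m ->
  improves m Mv l i = true -> Rr 8 = Mv i ->
  reaches (dp_program md) (MState 82 N Rr)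
    (fun s => pc s = 75 /\ inv_candidates k l (S i) (nreg s) (rreg s)) 20.
Proof.
  intros H5 Him Hq HR8.
  pose proof H5 as H5'.
  destruct H5' as ((HC & Hk & H22 & H23 & Hl & Hcur & H28) & Hlm & H26 & H27 & Hi & HR6 & HR5 & Hfr).
  pose proof HC as HC'. destruct HC' as (HB & H8 & H17 & H18 & H19 & Hkk & H29 & Ho & HW & HMC).
  pose proof HB as HB'. destruct_base HB'.
  assert (HE : E = 100 + m * n) by reflexivity.
  assert (FW : Rr (N 27 + N 20) = W k i) by (rewrite H27, <- HW by lia; f_equal; lia).
  assert (FC : Rr (N 27 + N 5) = Cv i) by (rewrite H27, B5; exact (proj2 (HMC i ltac:(lia)))).
  apply (backup_spec N Rr _ _ (Mv i) (Cv i) (W k i) (W k l)); try assumption; try lia.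
  intros R' HR13 HRfr.
  assert (HR'7 : R' 7 = Rr 7) by (apply HRfr; lia).
  pose proof (fun N' Rr' => inv_candidates_next k l i N Rr N' Rr' H5 Him) as Hfin.
  cbn [best_fold] in Hfin.
  unfold best_fold_regs in Hfr.
  destruct (best_fold md m a Mv Cv (W k) l i) as [[b g] f].
  destruct Hfr as [H24 Hf].
  destruct f.
  - destruct (Hf eq_refl) as [HR7 H25].
    sym_step. sym_step. rewrite HR'7, HR7, HR13. destruct (Rlt_dec _ _) as [Hlt|Hlt].
    + sym_step. sym_step. sym_step. sym_step. sym_step. sym_step. apply reaches_now. split; [reflexivity|].
      apply Hfin; try (intros; simpl_regs; first [reflexivity|apply HRfr; lia|lia]).
      cbn [best_step]. rewrite Hq. unfold best_fold_regs. destruct (Rlt_dec b _); [|contradiction].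
      simpl_regs. split; [reflexivity|]. intros _. split; [exact HR13|lia].
    + sym_step. sym_step. sym_step. sym_step. apply reaches_now. split; [reflexivity|].
      apply Hfin; try (intros; simpl_regs; first [reflexivity|apply HRfr; lia|lia]).
      cbn [best_step]. rewrite Hq. unfold best_fold_regs. destruct (Rlt_dec b _); [contradiction|].
      simpl_regs. split; [auto|]. intros _. split; [|auto]. rewrite HRfr by lia. auto.
  - sym_step. sym_step. sym_step. sym_step. sym_step. sym_step. sym_step. apply reaches_now. split; [reflexivity|].
    apply Hfin; try (intros; simpl_regs; first [reflexivity|apply HRfr; lia|lia]).
    cbn [best_step]. rewrite Hq. unfold best_fold_regs.
    simpl_regs. split; [reflexivity|]. intros _. split; [exact HR13|lia].
Qed.

Lemma candidates_loop k l d : forall i N Rr, m - i = d -> inv_candidates k l i N Rr ->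
  reaches (dp_program md) (MState 75 N Rr)
    (fun s => pc s = 101 /\ inv_candidates k l m (nreg s) (rreg s)) (30 * d + 2).
Proof.
  induction d as [|d IH]; intros i N Rr Hd H5;
  pose proof H5 as H5';
  destruct H5' as ((HC & Hk & H22 & H23 & Hl & Hcur & H28) & Hlm & H26 & H27 & Hi & HR6 & HR5 & Hfr);
  pose proof HC as HC'; destruct HC' as (HB & H8 & H17 & H18 & H19 & Hkk & H29 & Ho & HW & HMC);
  pose proof HB as HB'; destruct_base HB'.
  - sym_step. sym_step. apply reaches_now. split; [reflexivity|]. replace m with i by lia. exact H5.
  - assert (HE : E = 100 + m * n) by reflexivity.
    assert (FM : Rr (N 27) = Mv i) by (rewrite H27; exact (proj1 (HMC i ltac:(lia)))).
    apply (reaches_weaken _ _ _ (4 + (20 + (30 * d + 2)))); [lia|].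
    assert (H5b : inv_candidates k l i N (updR Rr 8 (Rr (N 27))))
      by (eapply inv_candidates_frame; [exact H5|solve_frame|solve_frame]).
    destruct (Nat.lt_ge_cases l m) as [Hlt|Hge].
    + sym_step. sym_step. sym_step. sym_step.
      rewrite (HR5 Hlt), FM. destruct (Rlt_dec _ _) as [Hq|Hq].
      * apply (reaches_weaken _ _ _ (20 + (30 * d + 2))); [lia|].
        eapply reaches_seq;
          [apply (improving_candidate k l i); [exact H5b|lia| |simpl_regs; first [exact FM|reflexivity]]|].
        -- unfold improves. destruct (Nat.ltb_spec l m); [|lia].
           destruct (Rlt_dec (Mv l) (Mv i)); [auto|contradiction].
        -- intros N' R' H5'. apply (IH (S i)); [lia|auto].
      * sym_step. sym_step. sym_step. sym_step.
        apply (reaches_weaken _ _ _ (30 * d + 2)); [lia|]. apply (IH (S i)); [lia|].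
        split; [eapply inv_states_frame; [exact (proj1 H5)|solve_frame|solve_frame]|].
        split; [auto|]. split; [simpl_regs; lia|]. split; [simpl_regs; lia|]. split; [lia|].
        split; [simpl_regs; auto|]. split; [intros; simpl_regs; auto|].
        cbn [best_fold]. unfold best_fold_regs in *.
        destruct (best_fold md m a Mv Cv (W k) l i) as [[b g] f].
        cbn [best_step]. unfold improves. destruct (Nat.ltb_spec l m); [|lia].
        destruct (Rlt_dec (Mv l) (Mv i)); [contradiction|]. simpl_regs. auto.
    + sym_step. sym_step. sym_step. sym_step.
      apply (reaches_weaken _ _ _ (20 + (30 * d + 2))); [lia|].
      eapply reaches_seq;
        [apply (improving_candidate k l i); [exact H5b|lia| |simpl_regs; first [exact FM|reflexivity]]|].
      -- unfold improves. destruct (Nat.ltb_spec l m); [lia|auto].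
      -- intros N' R' H5'. apply (IH (S i)); [lia|auto].
Qed.

Lemma inv_states_next k l N Rr N' Rr' : inv_states k l N Rr -> l <= m ->
  Rr 7 = W (S k) l ->
  (forall r, (r <= 8 \/ (17 <= r <= 21) \/ r = 29 \/ r = 31 \/ 100 <= r) -> N' r = N r) ->
  N' 22 = S l -> N' 23 = E + 4 * S l ->
  (lx < S l -> N' 28 = opt_action md m a Mv Cv (S k) lx) ->
  Rr' = updR Rr (N 23 + N 21) (Rr 7) ->
  inv_states k (S l) N' Rr'.
Proof.
  intros (HC & Hk & H22 & H23 & Hl & Hcur & H28) Hlm HR7 HN E22 E23 E28 ->.
  pose proof HC as HC'. destruct HC' as (HB & H8 & H17 & H18 & H19 & Hkk & H29 & Ho & HW & HMC).
  assert (HE : E = 100 + m * n) by reflexivity.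
  split.
  { eapply inv_dp_frame; [exact HC|intros; apply HN; lia|intros; simpl_regs; auto|
      intros; simpl_regs; auto|intros; simpl_regs; auto]. }
  split; [auto|]. split; [auto|]. split; [auto|]. split; [lia|].
  split; [|auto].
  intros l' Hl'. rewrite HN by lia. destruct (Nat.eq_dec l' l) as [->|Hne].
  - simpl_regs. exact HR7.
  - simpl_regs. apply Hcur. lia.
Qed.

Lemma store_state_value k l N Rr : inv_candidates k l m N Rr ->
  reaches (dp_program md) (MState 101 N Rr)
    (fun s => pc s = 62 /\ inv_states k (S l) (nreg s) (rreg s)) 8.
Proof.
  intros (H4 & Hlm & H26 & H27 & Hi & HR6 & HR5 & Hfr).
  pose proof H4 as (HC & Hk & H22 & H23 & Hl & Hcur & H28).
  pose proof HC as (HB & H8 & H17 & H18 & H19 & Hkk & H29 & Ho & HW & HMC).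
  pose proof HB as HB'. destruct_base HB'.
  assert (HE : E = 100 + m * n) by reflexivity.
  pose proof (best_fold_found md m a Mv Cv Hm1 (W k) l Hlm) as Hf.
  assert (HWS : W (S k) l = fst (fst (best_fold md m a Mv Cv (W k) l m))) by reflexivity.
  assert (Hact : opt_action md m a Mv Cv (S k) lx = snd (fst (best_fold md m a Mv Cv (W k) lx m))).
  { unfold opt_action. replace (S k - 1) with k by lia. reflexivity. }
  unfold best_fold_regs in Hfr.
  destruct (best_fold md m a Mv Cv (W k) l m) as [[b g] f] eqn:Ecf.
  cbn [snd] in Hf. cbn [fst] in HWS. subst f.
  destruct Hfr as [H24 Hbg]. destruct (Hbg eq_refl) as [HR7 H25].
  assert (HRW : Rr 7 = W (S k) l) by (rewrite HR7, HWS; reflexivity).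
  pose proof (fun N' Rr' => inv_states_next k l N Rr N' Rr' H4 Hlm HRW) as Hfin.
  destruct (Nat.lt_trichotomy l lx) as [Hlt|[Heq|Hgt]].
  - sym_step. sym_step. sym_step. sym_step. sym_step. sym_step. apply reaches_now. split; [reflexivity|].
    apply Hfin; try (intros; simpl_regs; first [reflexivity|lia]).
  - sym_step. sym_step. sym_step. sym_step. sym_step. sym_step. sym_step. sym_step. apply reaches_now. split; [reflexivity|].
    apply Hfin; try (intros; simpl_regs; first [reflexivity|lia]).
    intros; simpl_regs. rewrite Hact, <- Heq, Ecf. simpl. lia.
  - sym_step. sym_step. sym_step. sym_step. sym_step. sym_step. sym_step. apply reaches_now. split; [reflexivity|].
    apply Hfin; try (intros; simpl_regs; first [reflexivity|lia]).
Qed.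

Lemma inv_candidates_start k l N Rr N' Rr' : inv_states k l N Rr -> l <= m ->
  (forall r, (r <= 8 \/ (17 <= r <= 23) \/ r = 28 \/ r = 29 \/ r = 31 \/ 100 <= r) -> N' r = N r) ->
  (forall r, (r <= 1 \/ 100 <= r) -> Rr' r = Rr r) -> N' 26 = 0 -> N' 27 = E ->
  Rr' 6 = W k l -> (l < m -> Rr' 5 = Mv l) ->
  best_fold_regs (best_init m Mv (W k) l) N' Rr' ->
  inv_candidates k l 0 N' Rr'.
Proof.
  intros H4 Hlm HN HR E26 E27 E6 E5 Hf.
  split; [eapply inv_states_frame; [exact H4|exact HN|exact HR]|].
  split; [lia|]. split; [auto|]. split; [rewrite E27; lia|]. split; [lia|].
  split; [auto|]. split; [auto|]. exact Hf.
Qed.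

Lemma candidates_then_store k l N Rr : inv_candidates k l 0 N Rr ->
  reaches (dp_program md) (MState 75 N Rr)
    (fun s => pc s = 62 /\ inv_states k (S l) (nreg s) (rreg s)) ((30 * m + 2) + 8).
Proof.
  intros H5.
  eapply reaches_seq; [apply (candidates_loop k l m 0); [lia|exact H5]|].
  intros N' R' H5'. apply store_state_value. exact H5'.
Qed.

Lemma states_loop k d : forall l N Rr, m + 1 - l = d -> inv_states k l N Rr ->
  reaches (dp_program md) (MState 62 N Rr)
    (fun s => pc s = 109 /\ inv_states k (m + 1) (nreg s) (rreg s)) ((30 * m + 40) * d + 2).
Proof.
  induction d as [|d IH]; intros l N Rr Hd H4;
  pose proof H4 as H4';
  destruct H4' as (HC & Hk & H22 & H23 & Hl & Hcur & H28);
  pose proof HC as HC'; destruct HC' as (HB & H8 & H17 & H18 & H19 & Hkk & H29 & Ho & HW & HMC);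
  pose proof HB as HB'; destruct_base HB'.
  - apply (reaches_weaken _ _ _ 2); [lia|].
    sym_step. sym_step. apply reaches_now. split; [reflexivity|]. replace (m + 1) with l by lia. exact H4.
  - assert (HE : E = 100 + m * n) by reflexivity.
    assert (FW : Rr (N 23 + N 20) = W k l) by (rewrite H23, <- HW by lia; f_equal; lia).
    apply (reaches_weaken _ _ _ (10 + (((30 * m + 2) + 8) + ((30 * m + 40) * d + 2)))); [nia|].
    destruct (Nat.lt_ge_cases l m) as [Hlt|Hge].
    + assert (FM : Rr (N 23) = Mv l) by (rewrite H23; exact (proj1 (HMC l ltac:(lia)))).
      sym_step. sym_step. sym_step. sym_step. sym_step. sym_step. sym_step. sym_step. sym_step. sym_step.
      eapply reaches_seq; [apply candidates_then_store|].
      * eapply inv_candidates_start; [exact H4|lia|..];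
          try (intros; simpl_regs; first [reflexivity|lia|solve [auto]]).
        unfold best_init, best_fold_regs. destruct (Nat.ltb_spec l m); [|lia]. simpl_regs.
        split; [reflexivity|]. intros _. rewrite FM, FW. split; [reflexivity|lia].
      * intros N' R' H4''. apply (IH (S l)); [lia|auto].
    + sym_step. sym_step. sym_step. sym_step. sym_step. sym_step. sym_step. sym_step.
      apply (reaches_weaken _ _ _ (((30 * m + 2) + 8) + ((30 * m + 40) * d + 2))); [lia|].
      eapply reaches_seq; [apply candidates_then_store|].
      * eapply inv_candidates_start; [exact H4|lia|..];
          try (intros; simpl_regs; first [reflexivity|lia|solve [auto]]).
        unfold best_init, best_fold_regs. destruct (Nat.ltb_spec l m); [lia|]. simpl_regs.
        split; [reflexivity|]. discriminate.
      * intros N' R' H4''. apply (IH (S l)); [lia|auto].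
Qed.

Lemma stages_loop d : forall k N Rr, T - t - k = d -> inv_stage k N Rr ->
  reaches (dp_program md) (MState 58 N Rr) (fun s => pc s = 114 /\ inv_stage (T - t) (nreg s) (rreg s))
    (((30 * m + 40) * (m + 1) + 10) * d + 2).
Proof.
  induction d as [|d IH]; intros k N Rr Hd H3;
  pose proof H3 as H3'; destruct H3' as (HC & H28);
  pose proof HC as HC'; destruct HC' as (HB & H8 & H17 & H18 & H19 & Hkk & H29 & Ho & HW & HMC);
  pose proof HB as HB'; destruct_base HB'.
  - apply (reaches_weaken _ _ _ 2); [lia|].
    sym_step. sym_step. apply reaches_now. split; [reflexivity|]. replace (T - t) with k by lia. exact H3.
  - assert (HE : E = 100 + m * n) by reflexivity.
    apply (reaches_weaken _ _ _ (3 + (((30 * m + 40) * (m + 1) + 2) +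
                                      (5 + (((30 * m + 40) * (m + 1) + 10) * d + 2))))); [nia|].
    sym_step. sym_step. sym_step.
    eapply reaches_seq; [apply (states_loop k (m + 1) 0); [lia|]|].
    + split;
        [eapply inv_dp_frame; [exact HC|solve_frame|solve_frame|solve_frame|intros; split; solve_frame]|].
      split; [lia|]. split; [simpl_regs; auto|]. split; [simpl_regs; lia|]. split; [lia|].
      split; [intros; lia|intros; lia].
    + intros N' R' H4.
      destruct H4 as (HC4 & Hk4 & H22' & H23' & Hl' & Hcur' & H28').
      destruct HC4 as (HB4 & H8' & H17' & H18' & H19' & Hkk' & H29' & Ho' & HW' & HMC').
      clear B0 B1 B2 B3 B4 B5 B6 B7 B31 BN BR0 BR1.
      pose proof HB4 as HB4'. destruct_base HB4'.
      sym_step. sym_step. sym_step. sym_step. sym_step.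
      apply (IH (S k)); [lia|].
      split.
      * split; [eapply base_regs_frame; [exact HB4|solve_frame|solve_frame]|].
        split; [simpl_regs; auto|]. split; [simpl_regs; auto|]. split; [simpl_regs; auto|].
        split; [simpl_regs; lia|]. split; [lia|]. split; [simpl_regs; auto|].
        split; [simpl_regs; lia|].
        split.
        -- intros l Hl. simpl_regs. rewrite <- Hcur' by lia. f_equal. lia.
        -- intros l Hl. simpl_regs. auto.
      * intros _. simpl_regs. apply H28'. pose proof (best_row_le m Mv x). unfold lx. lia.
Qed.

Definition step_budget : nat :=
  7 + ((5 * m + 2) + (6 + (((8 * n + 30) * m + 2) +
  (5 + (((((30 * m + 40) * (m + 1) + 10) * (T - t) + 2) + 1)))))).

Lemma dp_program_output : t < T ->
  reaches (dp_program md) s0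
    (fun s => halted (dp_program md) s /\ nreg s 0 = opt_action md m a Mv Cv (T - t) lx)
    step_budget.
Proof.
  intros Ht. unfold step_budget.
  eapply reaches_seq; [apply prologue_spec|intros N1 R1 I1].
  eapply reaches_seq; [apply (table_ptr_loop m 0); [lia|exact I1]|intros N2 R2 I2].
  eapply reaches_seq; [apply rows_loop_entry; exact I2|intros N3 R3 I3].
  eapply reaches_seq; [apply (rows_loop m 0); [lia|exact I3]|intros N4 R4 I4].
  eapply reaches_seq; [apply dp_entry; exact I4|intros N5 R5 I5].
  eapply reaches_seq; [apply (stages_loop (T - t) 0); [lia|exact I5]|intros N6 R6 I6].
  destruct I6 as ((HB & _) & H28). pose proof HB as HB'. destruct_base HB'.
  sym_step. apply reaches_now. split; [apply le_n|].
  simpl_regs. rewrite B4, H28 by lia. rewrite Nat.add_0_r. reflexivity.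
Qed.

End Correctness.

Lemma step_budget_cubic m n T t : 1 <= m -> 1 <= n ->
  step_budget m n T t <= 200 * (m + n + T + 1) ^ 3.
Proof.
  intros Hm Hn. unfold step_budget. set (S := m + n + T + 1).
  assert (HmS : m + 1 <= S) by (unfold S; lia).
  assert (HnS : n <= S) by (unfold S; lia).
  assert (HK : T - t <= S) by (unfold S; lia).
  assert (HS1 : 1 <= S) by lia.
  replace (S ^ 3) with (S * S * S) by (simpl; lia).
  assert (A1 : (30 * m + 40) * (m + 1) <= 70 * S * S) by nia.
  assert (A2 : ((30 * m + 40) * (m + 1) + 10) * (T - t) <= (70 * S * S + 10) * S) by nia.
  assert (A3 : (8 * n + 30) * m <= 38 * S * S) by nia.
  assert (A4 : S <= S * S) by nia.
  assert (A5 : S * S <= S * S * S) by nia.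
  nia.
Qed.

Open Scope R_scope.

Theorem theorem1 :
  forall md : model,
  exists (P : list instr) (c d : nat),
    forall (m n T : nat) (a : R) (Rm RH : nat -> nat -> R) (h : nat -> nat),
      (1 <= m)%nat -> (1 <= n)%nat -> 0 <= a <= 1 ->
      (forall i, (i < m)%nat ->
         (h i < n)%nat /\ (forall j, (j < n)%nat -> RH i j <= RH i (h i))) ->
      exists pi : policy,
        (forall (t : nat) (x : state), (t < T)%nat ->
           computes P (c * (m + n + T + 1) ^ d) (encode m n T a Rm h t x) (pi t x))
        /\ optimal_policy md m n T a Rm h pi.
Proof.
  intros md. exists (dp_program md), 200%nat, 3%nat.
  intros m n T a Rm RH h Hm Hn Ha Hh.
  assert (Hh_lt : forall i, (i < m)%nat -> (h i < n)%nat) by (intros i Hi; apply Hh; auto).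
  assert (HCM : forall i, (i < m)%nat -> unlearned Rm h i <= rowmax n Rm i)
    by (intros i Hi; apply unlearned_le_rowmax, Hh_lt, Hi).
  exists (opt_policy md m a (rowmax n Rm) (unlearned Rm h) T). split.
  - intros t x Ht. apply reaches_halted_computes.
    apply (reaches_weaken _ _ _ (step_budget m n T t)); [apply step_budget_cubic; auto|].
    apply dp_program_output; auto.
  - split.
    + intros t x Ht. apply opt_policy_valid; auto.
    + intros pi' Hv. unfold total_reward.
      rewrite (value_opt_policy md m a (rowmax n Rm) (unlearned Rm h) Hm T T 0 init_state) by lia.
      apply value_le_opt_value; auto.
      intros s y Hs. apply Hv. lia.
Qed.
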